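(* Let $\Gamma:=\mathrm{Cos}(G,H,A)$ be a vertex-transitive graph and let $B$ be a subset of $A$. If every $\varphi\in\mathrm{Aut}(\Gamma)_H$ fixes the set $\{Hx\mid x\in B\}$ pointwise, then every $\varphi\in\mathrm{Aut}(\Gamma)_H$ fixes the set $\{Hx\mid x\in\langle B\rangle\}$ pointwise.
   Context: $G$ is a finite group, $H\le G$, and $A\subseteq G$ is a union of $(H,H)$-double cosets with $A=A^{-1}$. The coset graph $\mathrm{Cos}(G,H,A)$ has vertex set the right cosets of $H$ in $G$, with $Hx$ adjacent to $Hy$ iff $yx^{-1}\in A$. $\mathrm{Aut}(\Gamma)_H$ denotes the stabilizer in $\mathrm{Aut}(\Gamma)$ of the vertex $H$. *)

From mathcomp Require Import all_boot all_fingroup.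
Set Implicit Arguments. Unset Strict Implicit. Unset Printing Implicit Defensive.
Local Open Scope group_scope.

Section CosetGraph.
Variable gT : finGroupType.
Implicit Types (G H A : {set gT}) (U W : {set gT}).

Definition cos_vertices G H : {set {set gT}} := rcosets H G.

(* Adjacency: Hx ~ Hy iff y x^-1 \in A (independent of representatives
   when A is a union of (H,H)-double cosets). *)
Definition cos_adj A U W : bool :=
  [exists x, [exists y, [&& x \in U, y \in W & y * x^-1 \in A]]].

Definition double_coset_union H A : Prop := H * A * H = A.

Definition cos_aut G H A (f : {set gT} -> {set gT}) : Prop :=
  [/\ {in cos_vertices G H, forall U, f U \in cos_vertices G H},
      {in cos_vertices G H &, injective f} &
      {in cos_vertices G H &, forall U W, cos_adj A (f U) (f W) = cos_adj A U W}].

Definition cos_vertex_transitive G H A : Prop :=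
  forall U W, U \in cos_vertices G H -> W \in cos_vertices G H ->
    exists2 f, cos_aut G H A f & f U = W.
End CosetGraph.

From mathcomp Require Import all_boot all_fingroup.
Set Implicit Arguments. Unset Strict Implicit. Unset Printing Implicit Defensive.
Local Open Scope group_scope.

(* Right translations U |-> U x by x in G are automorphisms of Cos(G,H,A).
   Conjugating an automorphism f that fixes H and H x by the translation by x
   gives an automorphism fixing H, so if every such automorphism fixes H y, then
   f fixes H y x.  Hence the elements y of G whose coset is fixed by the whole
   stabiliser of H are closed under products, and <<B>> consists of products of
   elements of B. *)

Section CosetGraphTranslations.

Variables (gT : finGroupType) (G H : {group gT}) (A : {set gT}).

Lemma cos_adj_rcoset (U W : {set gT}) g :
  cos_adj A (U :* g) (W :* g) = cos_adj A U W.
Proof.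
apply/idP/idP => /existsP [x /existsP [y /and3P [Ux Wy yxA]]]; apply/existsP.
- exists (x * g^-1); apply/existsP; exists (y * g^-1).
  by rewrite -mem_rcoset Ux -mem_rcoset Wy invMg invgK !mulgA mulgKV.
- exists (x * g); apply/existsP; exists (y * g).
  by rewrite !mem_rcoset !mulgK Ux Wy invMg !mulgA mulgK.
Qed.

Lemma cos_aut_rcoset g : g \in G -> cos_aut G H A (fun U => U :* g).
Proof.
move=> Gg; split.
- move=> _ /rcosetsP [x Gx ->]; apply/rcosetsP; exists (x * g).
    exact: groupM.
  by rewrite rcosetM.
- by move=> U W _ _ eqUWg; rewrite -(rcosetK g U) eqUWg rcosetK.
- by move=> U W _ _; apply: cos_adj_rcoset.
Qed.

Lemma cos_aut_comp f h :
  cos_aut G H A f -> cos_aut G H A h -> cos_aut G H A (fun U => f (h U)).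
Proof.
move=> [f_on f_inj f_adj] [h_on h_inj h_adj]; split.
- by move=> U VU; apply/f_on/h_on.
- by move=> U W VU VW /f_inj eqUW; apply: h_inj => //; apply: eqUW; apply: h_on.
- by move=> U W VU VW; rewrite f_adj ?h_adj ?h_on.
Qed.

Lemma cos_aut_conj_rcoset f x :
  x \in G -> cos_aut G H A f -> cos_aut G H A (fun U => f (U :* x) :* x^-1).
Proof.
move=> Gx autf; have GxV : x^-1 \in G by rewrite groupV.
exact: cos_aut_comp (cos_aut_rcoset GxV) (cos_aut_comp autf (cos_aut_rcoset Gx)).
Qed.

Definition cos_stab_fixed (y : gT) : Prop :=
  forall f, cos_aut G H A f -> f (H : {set gT}) = H -> f (H :* y) = H :* y.

Lemma cos_stab_fixed1 : cos_stab_fixed 1.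
Proof. by move=> f _ fH; rewrite rcoset1. Qed.

Lemma cos_stab_fixedM x y :
  x \in G -> cos_stab_fixed x -> cos_stab_fixed y -> cos_stab_fixed (y * x).
Proof.
move=> Gx fix_x fix_y f autf fH.
have fHx : f (H :* x) :* x^-1 = H by rewrite fix_x // rcosetK.
have fHyx := fix_y _ (cos_aut_conj_rcoset Gx autf) fHx.
by rewrite rcosetM -[LHS](rcosetKV x) fHyx.
Qed.

End CosetGraphTranslations.

Theorem lemma3p5 (gT : finGroupType) (G H : {group gT}) (A B : {set gT}) :
  H \subset G -> A \subset G -> double_coset_union H A -> A^-1 = A ->
  cos_vertex_transitive G H A ->
  B \subset A ->
  (forall f, cos_aut G H A f -> f (H : {set gT}) = H ->
     forall x, x \in B -> f (H :* x) = H :* x) ->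
  forall f, cos_aut G H A f -> f (H : {set gT}) = H ->
     forall x, x \in <<B>> -> f (H :* x) = H :* x.
Proof.
move=> _ sAG _ _ _ sBA fixB f autf fH _ /gen_prodgP [n [c Bc ->]].
pose P y := y \in G /\ cos_stab_fixed G H A y.
suff [_ fix_prod] : P (\prod_(i < n) c i) by apply: fix_prod.
apply: (big_ind P).
- by split; [apply: group1 | apply: cos_stab_fixed1].
- by move=> x y [Gx fix_x] [Gy fix_y]; split; [apply: groupM | apply: cos_stab_fixedM].
- move=> i _; split; first exact: subsetP sAG _ (subsetP sBA _ (Bc i)).
  by move=> g autg gH; apply: fixB.
Qed.
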